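(* For any symmetric quiver $Q=(I,E)$ and $d\in\mathbb{N}^I$ there exists $\delta\in M(d)^{W_d}_\mathbb{R}$ such that $S^d_\delta=\{d\}$.
   Context: $Q$ symmetric: for all $i,j\in I$, the number of edges $i\to j$ equals that of $j\to i$. $R(d)=\bigoplus_{(i\to j)\in E}\mathrm{Hom}(V^i,V^j)$ ($\dim V^i=d^i$), $G(d)=\prod GL(V^i)$ with Lie algebra $\mathfrak{g}(d)$, diagonal torus $T(d)$ with weights $\beta^i_a$, $M(d)_\mathbb{R}$ its real weight space, $W_d=\prod\mathfrak{S}_{d^i}$. For a cocharacter $\lambda$: $n_\lambda=\langle\lambda,\det(R(d)^\vee)^{\lambda>0}\rangle-\langle\lambda,\det(\mathfrak{g}(d)^\vee)^{\lambda>0}\rangle$. A partition of $d$ is a collection of nonzero $d_1,\dots,d_k\in\mathbb{N}^I$ with sum $d$; $\lambda$ has associated partition $(d_j)$ if the $j$-th distinct value of $\langle\lambda,\beta^i_a\rangle$ occurs $d^i_j$ times for each $i$. $S^d_\delta$ is the set of partitions such that $n_\lambda/2+\langle\lambda,\delta\rangle\in\mathbb{Z}$ for all $\lambda$ with that associated partition; $\{d\}$ is the set consisting of the one-term partition. *)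

From HB Require Import structures.
From mathcomp Require Import all_boot all_order all_algebra.
From mathcomp Require Import fingroup perm.
From mathcomp Require Import reals.
Set Implicit Arguments. Unset Strict Implicit. Unset Printing Implicit Defensive.
Import Order.TTheory GRing.Theory Num.Theory.
Local Open Scope ring_scope.

Definition symmetric_quiver (I E : finType) (src tgt : E -> I) : Prop :=
  forall i j : I,
    #|[pred e : E | (src e == i) && (tgt e == j)]| =
    #|[pred e : E | (src e == j) && (tgt e == i)]|.

(* Index set of the weights beta^i_a of T(d): pairs (i, a) with a < d^i. *)
Definition wt (I : finType) (d : {ffun I -> nat}) : finType :=
  {i : I & 'I_(d i)}.

Definition wk (I : finType) (d : {ffun I -> nat}) (i : I) (a : 'I_(d i)) : wt d :=
  @Tagged I i (fun j => 'I_(d j)) a.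

Definition posz (z : int) : int := if 0 < z then z else 0.

(* A cocharacter lambda of T(d) is l : wt d -> int, <lambda, beta^i_a> = l (i,a).
   <lambda, det(R(d)^vee)^{lambda>0}>: weights of R(d)^vee on the summand
   Hom(V^i,V^j) of the edge e : i -> j are beta^i_a - beta^j_b. *)
Definition nR (I E : finType) (src tgt : E -> I) (d : {ffun I -> nat})
    (l : wt d -> int) : int :=
  \sum_(e : E) \sum_(a : 'I_(d (src e))) \sum_(b : 'I_(d (tgt e)))
     posz (l (wk a) - l (wk b)).

(* <lambda, det(g(d)^vee)^{lambda>0}>: weights beta^i_a - beta^i_b. *)
Definition ng (I : finType) (d : {ffun I -> nat}) (l : wt d -> int) : int :=
  \sum_(i : I) \sum_(a : 'I_(d i)) \sum_(b : 'I_(d i))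
     posz (l (wk a) - l (wk b)).

Definition n_lambda (I E : finType) (src tgt : E -> I) (d : {ffun I -> nat})
    (l : wt d -> int) : int :=
  nR src tgt l - ng l.

Definition pairing (R : realType) (I : finType) (d : {ffun I -> nat})
    (l : wt d -> int) (delta : wt d -> R) : R :=
  \sum_(k : wt d) (l k)%:~R * delta k.

Definition W_invariant (R : realType) (I : finType) (d : {ffun I -> nat})
    (delta : wt d -> R) : Prop :=
  forall (s : forall i : I, {perm 'I_(d i)}) (i : I) (a : 'I_(d i)),
    delta (wk (s i a)) = delta (wk a).

Definition is_partition (I : finType) (d : {ffun I -> nat})
    (p : seq {ffun I -> nat}) : Prop :=
  (forall x, x \in p -> exists i, x i <> 0%N) /\
  (forall i, (\sum_(x <- p) x i)%N = d i).

(* the partition associated to lambda: the distinct values of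
   <lambda, beta^i_a>, listed in decreasing order; the j-th one occurs
   d_j^i times among the beta^i_a. *)
Definition assoc_partition (I : finType) (d : {ffun I -> nat})
    (l : wt d -> int) : seq {ffun I -> nat} :=
  [seq [ffun i => #|[pred a : 'I_(d i) | l (wk a) == v]|]
     | v <- sort (fun x y : int => y <= x) (undup [seq l k | k <- enum (wt d)])].

Definition in_S (R : realType) (I E : finType) (src tgt : E -> I)
    (d : {ffun I -> nat}) (delta : wt d -> R) (p : seq {ffun I -> nat}) : Prop :=
  forall l : wt d -> int, assoc_partition l = p ->
    ((n_lambda src tgt l)%:~R / 2 + pairing l delta) \is a Num.int.

From HB Require Import structures.
From mathcomp Require Import all_boot all_order all_algebra.
From mathcomp Require Import reals intdiv zify ring.
Set Implicit Arguments. Unset Strict Implicit. Unset Printing Implicit Defensive.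
Import Order.TTheory GRing.Theory Num.Theory.
Local Open Scope ring_scope.

(* Let delta be constant on the weights of each vertex: delta_i = kappa_i / 2 + 1 / M, where
   M = sum_i d^i and kappa_i = chi(e_i, d - e_i) for the Euler form chi of Q.  As Q is
   symmetric, so is chi, hence chi(x, d - x) = sum_i x^i kappa_i (mod 2) for all x.
   A cocharacter with partition {d} is constant, say v; then n_lambda = 0 and
   <lambda, delta> = v (sum_i d^i kappa_i / 2 + 1), an integer since chi(d, 0) = 0.
   For a partition with at least two parts, let lambda_0 take the value -j on the j-th block
   and lambda_1 be lambda_0 with the first block raised by 1.  Both have that partition, and
   n/2 + <., delta> increases from lambda_0 to lambda_1 by
   (sum_i x^i kappa_i - chi(x, d - x)) / 2 + X / M, with x the first part and
   X = sum_i x^i: an integer plus a number strictly between 0 and 1. *)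

Lemma dvdz_mul_subr1 (x : int) : (2 %| x * (x - 1))%Z.
Proof.
have even_nat n : (2 %| n.+1 * n)%N by rewrite dvdn2 oddM /= andNb.
case: x => [[|n]|n]; first by rewrite mul0r dvdz0.
  have -> : n.+1%:Z * (n.+1%:Z - 1) = (n.+1 * n)%N by lia.
  exact: even_nat.
rewrite NegzE; have -> : - n.+1%:Z * (- n.+1%:Z - 1) = (n.+2 * n.+1)%N by lia.
exact: even_nat.
Qed.

Lemma half_intr_int (R : archiFieldType) (z : int) :
  (2 %| z)%Z -> (z%:~R / 2 : R) \is a Num.int.
Proof. by case/dvdzP => q ->; rewrite intrM mulfK ?intr_int ?pnatr_eq0. Qed.

Lemma ratio_notin_int (R : archiFieldType) (m n : nat) :
  (0 < m < n)%N -> (m%:R / n%:R : R) \isn't a Num.int.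
Proof.
case/andP => m_gt0 lt_mn; have n_gt0 : (0 < n)%N := leq_trans m_gt0 (ltnW lt_mn).
have ratio_gt0 : (0 : R) < m%:R / n%:R by rewrite divr_gt0 ?ltr0n.
apply/negP => /norm_intr_ge1/(_ (lt0r_neq0 ratio_gt0)).
by rewrite gtr0_norm // ler_pdivlMr ?ltr0n // mul1r ler_nat leqNgt lt_mn.
Qed.

Lemma sum_natr_card (R : nzSemiRingType) (T : finType) (A : pred T) :
  \sum_(a : T) ((A a)%:R : R) = #|A|%:R.
Proof.
rewrite -sum1_card natr_sum [RHS]big_mkcond.
by apply: eq_bigr => a _; rewrite unfold_in; case: (A a).
Qed.

Lemma card_nth (T : eqType) (x0 : T) (s : seq T) (n : nat) (P : pred T) :
  size s = n -> #|[pred a : 'I_n | P (nth x0 s a)]| = count P s.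
Proof.
move=> <-; rewrite cardE /enum_mem size_filter -enumT -[in RHS](mkseq_nth x0 s).
by rewrite /mkseq -val_enum_ord -map_comp count_map.
Qed.

Lemma sum_square_sym (I : finType) (V : nmodType) (a : I -> I -> V) :
    (forall i j, a i j = a j i) ->
  \sum_(i : I) \sum_(j : I) a i j =
  \sum_(i : I) a i i + (\sum_(i : I) \sum_(j | (enum_rank i < enum_rank j)%N) a i j) *+ 2.
Proof.
move=> asym.
have split_row i : \sum_(j : I) a i j = a i i +
    \sum_(j | (enum_rank i < enum_rank j)%N) a i j +
    \sum_(j | (enum_rank j < enum_rank i)%N) a i j.
  rewrite (bigD1 i) //= -addrA; congr (_ + _).
  rewrite (bigID (fun j => (enum_rank i < enum_rank j)%N)) /=.
  by congr (_ + _); apply: eq_bigl => j;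
    rewrite -(inj_eq enum_rank_inj) -(inj_eq val_inj); case: ltngtP.
rewrite (eq_bigr _ (fun i _ => split_row i)) !big_split /= -addrA mulr2n.
congr (_ + (_ + _)); rewrite (exchange_big_dep xpredT) //=.
by apply: eq_bigr => i _; apply: eq_bigr => j _.
Qed.

Lemma quadratic_form_sym_mod2 (I : finType) (a : I -> I -> int) (x : I -> int) :
    (forall i j, a i j = a j i) ->
  (\sum_(i : I) \sum_(j : I) x i * x j * a i j == \sum_(i : I) x i * a i i %[mod 2])%Z.
Proof.
move=> asym; rewrite eqz_mod_dvd sum_square_sym => [|i j]; last first.
  by rewrite asym (mulrC (x i)).
set T := (X in X *+ 2); rewrite addrAC -sumrB rpredD //.
  rewrite rpred_sum // => i _.
  by rewrite -mulrBl -{3}[x i]mulr1 -mulrBr dvdz_mulr ?dvdz_mul_subr1.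
by apply/dvdzP; exists T; rewrite mulr_natr.
Qed.

Section EulerForm.

Variables (I E : finType) (src tgt : E -> I).

Definition edge_count (i j : I) : nat :=
  #|[pred e : E | (src e == i) && (tgt e == j)]|.

Lemma sum_edges (V : nmodType) (F : I -> I -> V) :
  \sum_(e : E) F (src e) (tgt e) = \sum_(i : I) \sum_(j : I) F i j *+ edge_count i j.
Proof.
rewrite (partition_big (fun e => (src e, tgt e)) xpredT) //= pair_big /=.
apply: eq_bigr => -[i j] _; rewrite (eq_bigr (fun=> F i j)) => [|e /eqP[-> ->]] //.
by rewrite sumr_const; congr (_ *+ _); apply: eq_card => e; rewrite !inE xpair_eqE.
Qed.

Definition euler_form (a b : I -> int) : int :=
  \sum_(i : I) a i * b i - \sum_(e : E) a (src e) * b (tgt e).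

Definition euler_coef (i j : I) : int := (i == j)%:R - (edge_count i j)%:R.

Lemma euler_formE a b :
  euler_form a b = \sum_(i : I) \sum_(j : I) a i * b j * euler_coef i j.
Proof.
rewrite /euler_form (sum_edges (fun i j => a i * b j)).
transitivity (\sum_(i : I) (a i * b i - \sum_(j : I) a i * b j *+ edge_count i j)).
  by rewrite sumrB.
apply: eq_bigr => i _; rewrite [RHS](eq_bigr (fun j => a i * b j * (i == j)%:R
                                                  - a i * b j *+ edge_count i j)).
  rewrite sumrB; congr (_ - _).
  rewrite (bigD1 i) //= eqxx mulr1 big1 ?addr0 // => j.
  by rewrite eq_sym => /negPf->; rewrite mulr0.
by move=> j _; rewrite /euler_coef mulrBr (mulr_natr _ (edge_count i j)).
Qed.

(* euler_parity d i = euler_form e_i (d - e_i), for e_i the i-th unit vector. *)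
Definition euler_parity (d : I -> int) (i : I) : int :=
  \sum_(j : I) euler_coef i j * d j - euler_coef i i.

Hypothesis hsym : symmetric_quiver src tgt.

Lemma euler_form_parity (d x : I -> int) :
  (euler_form x (fun i => d i - x i) == \sum_(i : I) x i * euler_parity d i %[mod 2])%Z.
Proof.
have coef_sym i j : euler_coef i j = euler_coef j i.
  by rewrite /euler_coef /edge_count eq_sym hsym.
set C := euler_coef; rewrite eqz_mod_dvd.
have -> : euler_form x (fun i => d i - x i) - \sum_(i : I) x i * euler_parity d i =
    - (\sum_(i : I) \sum_(j : I) x i * x j * C i j - \sum_(i : I) x i * C i i).
  rewrite euler_formE opprB -!sumrB; apply: eq_bigr => i _.
  have -> : \sum_(j : I) x i * (d j - x j) * C i j =
      x i * \sum_(j : I) C i j * d j - \sum_(j : I) x i * x j * C i j.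
    by rewrite mulr_sumr -sumrB; apply: eq_bigr => j _; ring.
  by rewrite /euler_parity; ring.
by rewrite rpredN -eqz_mod_dvd quadratic_form_sym_mod2.
Qed.

End EulerForm.

Lemma sum_wt (V : nmodType) (I : finType) (d : {ffun I -> nat}) (F : wt d -> V) :
  \sum_(k : wt d) F k = \sum_(i : I) \sum_(a : 'I_(d i)) F (wk a).
Proof.
rewrite (sig_big_dep (J := fun i => 'I_(d i)) xpredT (fun=> xpredT) (fun i a => F (wk a))).
by apply: eq_bigr => -[i a].
Qed.

Lemma constant_of_assoc_partition1 (I : finType) (d : {ffun I -> nat})
    (l : wt d -> int) x :
  assoc_partition l = [:: x] -> exists v, forall k, l k = v.
Proof.
move/(congr1 size); rewrite size_map size_sort.
case vals : (undup [seq l k | k <- enum (wt d)]) => [|v [|? ?]] // _; exists v => k.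
have : l k \in undup [seq l k | k <- enum (wt d)] by rewrite mem_undup map_f ?mem_enum.
by rewrite vals inE => /eqP.
Qed.

Lemma n_lambda_const (I E : finType) (src tgt : E -> I) (d : {ffun I -> nat})
    (l : wt d -> int) v :
  (forall k, l k = v) -> n_lambda src tgt l = 0.
Proof.
move=> lv; rewrite /n_lambda /nR /ng !big1 ?subrr // => *; rewrite big1 // => *;
  by rewrite big1 // => *; rewrite !lv subrr.
Qed.

Lemma first_part_bounds (I : finType) (d : {ffun I -> nat}) (p : seq {ffun I -> nat}) :
  is_partition d p -> (1 < size p)%N ->
  (0 < \sum_(i : I) (p`_0)%R i < \sum_(i : I) d i)%N.
Proof.
case: p => [|x [|y q]] // hp _ /=.
have sum_gt0 (f : I -> nat) i : f i <> 0%N -> (0 < \sum_(j : I) f j)%N.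
  by move=> /eqP nz_fi; rewrite (bigD1 i) //= addn_gt0 lt0n nz_fi.
have [i0 /sum_gt0 -> /=] := hp.1 x (mem_head _ _).
have [i1 /sum_gt0 y_gt0] : exists i, y i <> 0%N by apply: hp.1; rewrite !inE eqxx orbT.
rewrite -(eq_bigr _ (fun i _ => hp.2 i)) exchange_big !big_cons /=.
by rewrite -[X in (X < _)%N]addn0 ltn_add2l ltn_addr.
Qed.

Definition depth (j : nat) : int := - j%:Z.

Definition raised_depth (j : nat) : int := depth j + (j == 0%N)%:R.

Lemma depth_decr : {homo depth : j j' / (j < j')%N >-> j' < j}.
Proof. by move=> j j'; rewrite /depth ltrN2 ltz_nat. Qed.

Lemma raised_depth_decr : {homo raised_depth : j j' / (j < j')%N >-> j' < j}.
Proof. by rewrite /raised_depth /depth => -[|j] [|j'] //=; lia. Qed.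

Lemma posz_raised_depthB j j' :
  posz (raised_depth j - raised_depth j') - posz (depth j - depth j') =
  ((j == 0%N) && (j' != 0%N))%:R.
Proof.
rewrite /raised_depth /depth /posz.
by case: j => [|j]; case: j' => [|j'] /=; repeat case: ifP; lia.
Qed.

Section BlockCocharacters.

Variables (I : finType) (d : {ffun I -> nat}) (p : seq {ffun I -> nat}).
Hypothesis hp : is_partition d p.

Definition block_labels (i : I) : seq nat :=
  flatten [seq nseq (p`_j i)%R j | j <- iota 0 (size p)].

Lemma size_block_labels i : size (block_labels i) = d i.
Proof.
rewrite size_flatten /shape -map_comp sumnE big_map -hp.2 [RHS](big_nth 0).
by rewrite /index_iota subn0; apply: eq_bigr => j _; rewrite /= size_nseq.
Qed.

Lemma count_block_labels i j : (j < size p)%N -> count_mem j (block_labels i) = p`_j i.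
Proof.
move=> lt_jp; rewrite count_flatten sumnE !big_map.
rewrite (eq_bigr (fun t => ((t == j) * (p`_t i)%R)%N)) => [|t _]; last first.
  by rewrite count_nseq /= eq_sym.
rewrite -(subn0 (size p)) -/(index_iota 0 _) big_mkord (bigD1 (Ordinal lt_jp)) //=.
by rewrite eqxx mul1n big1 ?addn0 // => t /negPf; rewrite -val_eqE /= => ->.
Qed.

Lemma mem_block_labels i j : j \in block_labels i -> (j < size p)%N.
Proof.
by case/flattenP => s /mapP[t]; rewrite mem_iota => /andP[_ lt_tp] -> /nseqP[->].
Qed.

Definition block_of (k : wt d) : nat := nth 0%N (block_labels (tag k)) (tagged k).

Definition block_cochar (v : nat -> int) : wt d -> int := fun k => v (block_of k).

Lemma block_of_lt k : (block_of k < size p)%N.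
Proof.
by apply: (@mem_block_labels (tag k)); rewrite mem_nth // size_block_labels.
Qed.

Lemma card_block i j :
  (j < size p)%N -> #|[pred a : 'I_(d i) | block_of (wk a) == j]| = p`_j i.
Proof.
by move=> lt_jp; rewrite -count_block_labels //; exact: card_nth (size_block_labels i).
Qed.

Lemma block_of_surj j : (j < size p)%N -> exists k, block_of k = j.
Proof.
move=> lt_jp; have [i nz_pji] := hp.1 _ (mem_nth 0 lt_jp).
have : (0 < #|[pred a : 'I_(d i) | block_of (wk a) == j]|)%N.
  by rewrite card_block // lt0n; apply/eqP.
by case/card_gt0P => a /eqP <-; exists (wk a).
Qed.

Lemma assoc_partition_block_cochar (v : nat -> int) :
  {homo v : j j' / (j < j')%N >-> j' < j} -> assoc_partition (block_cochar v) = p.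
Proof.
move=> v_decr.
have v_inj : injective v.
  by move=> j j' eq_v; case: (ltngtP j j') => // /v_decr; rewrite eq_v ltxx.
have values : undup [seq block_cochar v k | k <- enum (wt d)] =i
              [seq v j | j <- iota 0 (size p)].
  move=> w; rewrite mem_undup; apply/mapP/mapP => [[k _ ->]|[j]].
    by exists (block_of k); rewrite ?mem_iota ?block_of_lt.
  by rewrite mem_iota => /andP[_ /block_of_surj[k <-]] ->; exists k; rewrite ?mem_enum.
have sorted_values :
    sort (fun x y : int => y <= x) (undup [seq block_cochar v k | k <- enum (wt d)])
    = [seq v j | j <- iota 0 (size p)].
  apply: (@sorted_eq _ (fun x y : int => y <= x) ge_trans ge_anti).
  - exact: (@sort_sorted _ (fun x y : int => y <= x) (fun x y => le_total y x)).
  - apply: (homo_sorted (e := ltn)) (iota_ltn_sorted 0 _) => j j' /v_decr.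
    exact: ltW.
  - apply: uniq_perm; rewrite ?sort_uniq ?undup_uniq ?map_inj_uniq ?iota_uniq //.
    by move=> w; rewrite mem_sort values.
rewrite /assoc_partition sorted_values -map_comp -[RHS](mkseq_nth 0 p).
apply/eq_in_map => j; rewrite mem_iota => /andP[_ lt_jp].
apply/ffunP => i; rewrite ffunE -(card_block i lt_jp).
by apply: eq_card => a; rewrite !inE /= (inj_eq v_inj).
Qed.

Hypothesis p_gt0 : (0 < size p)%N.
Local Notation first_part := (p`_0)%R.

Lemma sum_first_block i :
  \sum_(a : 'I_(d i)) ((block_of (wk a) == 0%N)%:R : int) = (first_part i)%:R.
Proof. by rewrite (sum_natr_card _ [pred a | block_of (wk a) == 0%N]) card_block. Qed.

Lemma pos_pairs_raisedB i i' :
  \sum_(a : 'I_(d i)) \sum_(b : 'I_(d i'))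
     posz (block_cochar raised_depth (wk a) - block_cochar raised_depth (wk b))
  - \sum_(a : 'I_(d i)) \sum_(b : 'I_(d i'))
     posz (block_cochar depth (wk a) - block_cochar depth (wk b))
  = (first_part i)%:R * ((d i')%:R - (first_part i')%:R).
Proof.
rewrite -sumrB -sum_first_block mulr_suml; apply: eq_bigr => a _.
have -> : (d i')%:R = \sum_(b : 'I_(d i')) (1 : int) by rewrite sumr_const card_ord.
rewrite -sum_first_block -!sumrB mulr_sumr.
by apply: eq_bigr => b _; rewrite posz_raised_depthB; case: eqP; case: eqP.
Qed.

Lemma n_lambda_raisedB (E : finType) (src tgt : E -> I) :
  n_lambda src tgt (block_cochar raised_depth) - n_lambda src tgt (block_cochar depth) =
  - euler_form src tgt (fun i => (first_part i)%:R)
                       (fun i => (d i)%:R - (first_part i)%:R).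
Proof.
rewrite /euler_form -(eq_bigr _ (fun e _ => pos_pairs_raisedB (src e) (tgt e))).
by rewrite -(eq_bigr _ (fun i _ => pos_pairs_raisedB i i)) !sumrB /n_lambda /nR /ng; ring.
Qed.

Lemma pairing_raisedB (R : realType) (c : I -> R) :
  pairing (block_cochar raised_depth) (fun k => c (tag k))
  - pairing (block_cochar depth) (fun k => c (tag k)) =
  \sum_(i : I) (first_part i)%:R * c i.
Proof.
rewrite /pairing -sumrB sum_wt; apply: eq_bigr => i _.
rewrite (eq_bigr (fun a => ((block_of (wk a) == 0%N)%:R : int)%:~R * c i)) => [|a _].
  by rewrite -mulr_suml -rmorph_sum /= sum_first_block natz pmulrn.
by rewrite -mulrBl -intrB /block_cochar /raised_depth addrC addKr.
Qed.

End BlockCocharacters.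

Section ParityDelta.

Variables (R : realType) (I E : finType) (src tgt : E -> I) (d : {ffun I -> nat}).
Hypothesis hsym : symmetric_quiver src tgt.

Local Notation M := (\sum_(i : I) d i)%N.
Local Notation kappa := (euler_parity src tgt (fun i => (d i)%:R)).

Definition vertex_delta (i : I) : R := (kappa i)%:~R / 2 + M%:R^-1.

Definition parity_delta (k : wt d) : R := vertex_delta (tag k).

Lemma sum_vertex_delta (x : I -> nat) :
  \sum_(i : I) (x i)%:R * vertex_delta i =
  (\sum_(i : I) (x i)%:R * kappa i)%:~R / 2 + (\sum_(i : I) x i)%N%:R / M%:R.
Proof.
rewrite rmorph_sum natr_sum !mulr_suml -big_split; apply: eq_bigr => i _ /=.
by rewrite /vertex_delta intrM natz pmulrn mulrDr mulrA.
Qed.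

Lemma in_S_single_part : (0 < M)%N -> in_S src tgt parity_delta [:: d].
Proof.
move=> M_gt0 l /constant_of_assoc_partition1[v lv].
rewrite (n_lambda_const _ _ lv) mul0r add0r.
have -> : pairing l parity_delta = v%:~R * \sum_(i : I) (d i)%:R * vertex_delta i.
  rewrite /pairing sum_wt mulr_sumr; apply: eq_bigr => i _.
  rewrite (eq_bigr (fun=> v%:~R * vertex_delta i)) => [|a _]; last by rewrite lv.
  by rewrite sumr_const card_ord mulr_natl mulrnAr.
rewrite sum_vertex_delta divff ?pnatr_eq0 -?lt0n // rpredM ?intr_int // rpredD ?rpred1 //.
apply: half_intr_int; have := euler_form_parity hsym (fun i => (d i)%:R) (fun i => (d i)%:R).
have -> : euler_form src tgt (fun i => (d i)%:R) (fun i => (d i)%:R - (d i)%:R) = 0.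
  by rewrite /euler_form !big1 ?subrr // => *; rewrite subrr mulr0.
by rewrite eq_sym eqz_mod_dvd subr0.
Qed.

Lemma not_in_S_of_size_gt1 p :
  is_partition d p -> (1 < size p)%N -> ~ in_S src tgt parity_delta p.
Proof.
move=> hp p_gt1 inS; have p_gt0 : (0 < size p)%N := ltnW p_gt1.
have := rpredB (inS _ (assoc_partition_block_cochar hp raised_depth_decr))
               (inS _ (assoc_partition_block_cochar hp depth_decr)).
have -> : forall (a b : int) (e f : R),
    (a%:~R / 2 + e) - (b%:~R / 2 + f) = (a - b)%:~R / 2 + (e - f).
  by move=> *; rewrite intrB; ring.
rewrite n_lambda_raisedB // /parity_delta pairing_raisedB // sum_vertex_delta.
rewrite addrA -mulrDl -rmorphD /= (addrC (- _)) rpredDl ?half_intr_int //.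
  exact/negP/ratio_notin_int/first_part_bounds.
by rewrite -eqz_mod_dvd eq_sym euler_form_parity.
Qed.

End ParityDelta.

Unset Implicit Arguments.

Theorem proposition8p8 (R : realType) (I E : finType) (src tgt : E -> I)
  (hsym : symmetric_quiver src tgt) (d : {ffun I -> nat})
  (hd : exists i, d i <> 0%N) :
  exists delta : wt d -> R,
    W_invariant delta /\
    forall p : seq {ffun I -> nat}, is_partition d p ->
      (in_S src tgt delta p <-> p = [:: d]).
Proof.
have d_gt0 : (0 < \sum_(i : I) d i)%N.
  by have [i /eqP nz_di] := hd; rewrite (bigD1 i) //= addn_gt0 lt0n nz_di.
exists (@parity_delta R I E src tgt d); split=> // p hp.
split=> [inS|->]; last exact: in_S_single_part.
case: p hp inS => [|x [|y q]] hp inS.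
- by have [i] := hd; rewrite -hp.2 big_nil.
- by congr [:: _]; apply/ffunP => i; rewrite -hp.2 big_seq1.
- by case: (not_in_S_of_size_gt1 hsym hp isT inS).
Qed.
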